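(* Let $n\ge3$ be an integer such that $n+1$ is a perfect square, and let $q\le n$ be a prime with $q>\frac{2n}{3}$ and $q\equiv3\pmod 4$. Then $R_{(n,n)}(x)$ has no factor in $\mathbb{Z}[x]$ whose degree lies in the interval $[q,n]$.
   Context: $\mathrm{He}_k(x)$ denotes the monic probabilists' Hermite polynomial of degree $k$. For a partition $\lambda=(\lambda_1\ge\dots\ge\lambda_r\ge0)$ the degree sequence is $n_\lambda=(\lambda_r,\lambda_{r-1}+1,\dots,\lambda_1+r-1)$ and $\mathrm{He}_\lambda=\mathrm{Wr}[\mathrm{He}_{n_1},\dots,\mathrm{He}_{n_r}]/\prod_{i<j}(n_j-n_i)$. The $2$-core of $\lambda$ is obtained by successively replacing entries $a$ of $n_\lambda$ by $a-2\ge 0$ not already in $n_\lambda$ until impossible; $\mathrm{He}_\lambda(x)=x^{|\bar\lambda|}R_\lambda(x)$ with $R_\lambda(0)\ne0$. For $\lambda=(n,n)$ the $2$-core is empty, so $R_{(n,n)}=\mathrm{He}_{(n,n)}=\mathrm{Wr}[\mathrm{He}_n,\mathrm{He}_{n+1}]$, a monic integer polynomial of degree $2n$. *)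

From mathcomp Require Import all_boot all_order all_algebra.
Set Implicit Arguments. Unset Strict Implicit. Unset Printing Implicit Defensive.
Import GRing.Theory.
Local Open Scope ring_scope.

(* Pair (He_k, He_{k+1}) of monic probabilists' Hermite polynomials over int,
   via He_0 = 1, He_1 = x, He_{k+1} = x He_k - k He_{k-1}. *)
Fixpoint hermite_pair (k : nat) : {poly int} * {poly int} :=
  match k with
  | 0%N => (1, 'X)
  | k'.+1 => let: (a, b) := hermite_pair k' in (b, 'X * b - (k'.+1)%:R *: a)
  end.

Definition He (k : nat) : {poly int} := (hermite_pair k).1.

Definition Wr2 (f g : {poly int}) : {poly int} := f * g^`() - f^`() * g.

(* R_{(n,n)} = He_{(n,n)} = Wr[He_n, He_{n+1}] (normalising product = 1) *)
Definition R_nn (n : nat) : {poly int} := Wr2 (He n) (He n.+1).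

Definition divides_in_Zx (p P : {poly int}) : Prop := exists r : {poly int}, P = p * r.

From mathcomp Require Import all_boot all_algebra finfield.
From mathcomp Require Import ring zify.
Import GRing.Theory.
Set Implicit Arguments. Unset Strict Implicit.

(* 1. The coefficients of He_k have an explicit closed form (hcoef); for
      q <= k < 2q all coefficients below x^q are divisible by q.  Hence
      He_(q+s) = x^q He_s modulo q, and since a common factor h of f and g comes
      out of Wr[f, g] as h^2, R_(n,n) = x^(2q) Wr[He_(n-q), He_(n-q+1)] mod q.
   2. q^2 divides the coefficients of R_(n,n) of degree <= q (each is a sum of
      products of two multiples of q, and R_(n,n) is even).
   3. The constant term of Wr[He_k, He_(k+1)] is ((2u-1)!!)^2 (1 or k + 1); so
      R_(n,n)(0) = q^2 X and, as n + 1 is a square, X times the coefficient of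
      x^(2q) is a nonzero square modulo q.
   4. For any factorization R = P Q, the lowest nonzero residues of P and Q
      modulo q sit in degrees i + j = 2q; if i, j > 0, reducing R_min(i,j)
      modulo q^2 (or R_q and R_(2q) when i = j = q) contradicts step 2 or
      makes -1 a square modulo q.  So deg P >= 2q or deg Q >= 2q, which is
      incompatible with q <= deg P <= n and 2n < 3q. *)

Definition oddfact (j : nat) : nat := \prod_(i < j) (2 * i + 1).

Lemma oddfact0 : oddfact 0 = 1.
Proof. by rewrite /oddfact big_ord0. Qed.

Lemma oddfactS j : oddfact j.+1 = oddfact j * (2 * j + 1).
Proof. by rewrite /oddfact big_ord_recr. Qed.

(* Closed form of the coefficient of x^d in He_k:
   (-1)^j C(k, d) (2j-1)!!  when k = d + 2j, and 0 otherwise. *)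
Definition hcoef (k d : nat) : int :=
  if (d <= k) && ~~ odd (k - d) then
    ((-1) ^+ ((k - d)./2) * ('C(k, d) * oddfact ((k - d)./2))%:Z)%R
  else 0%R.

Lemma hcoef_gt k d : k < d -> hcoef k d = 0%R.
Proof. by move=> lt_kd; rewrite /hcoef leqNgt lt_kd. Qed.

Lemma hcoef_odd k d : odd (k + d) -> hcoef k d = 0%R.
Proof.
move=> odd_kd; rewrite /hcoef; case: leqP => //= le_dk.
by move: odd_kd; rewrite -{1}(subnK le_dk) -addnA oddD addnn odd_double; case: odd.
Qed.

Lemma hcoef_eq d j :
  hcoef (d + j.*2) d = ((-1) ^+ j * ('C(d + j.*2, d) * oddfact j)%:Z)%R.
Proof. by rewrite /hcoef leq_addr /= addKn odd_double /= doubleK. Qed.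

Lemma hcoef_diag k : hcoef k k = 1.
Proof. by have := hcoef_eq k 0; rewrite addn0 binn oddfact0. Qed.

Lemma hcoef_cases k d :
  [\/ k < d, odd (k + d) | exists j, k = d + j.*2].
Proof.
case: (ltnP k d) => [lt_kd|le_dk]; first by constructor 1.
case odd_kd: (odd (k + d)); first by constructor 2.
constructor 3; exists ((k - d)./2).
have := odd_double_half (k - d); rewrite oddB // -oddD odd_kd add0n => ->.
by rewrite subnKC.
Qed.

Lemma He0 : He 0 = 1%R. Proof. by []. Qed.

Lemma He1 : He 1 = 'X%R. Proof. by []. Qed.

Lemma He_rec k : He k.+2 = ('X * He k.+1 - k.+1%:R *: He k)%R.
Proof.
have HeS i : He i.+1 = (hermite_pair i).2 by rewrite /He /=; case: hermite_pair.
by rewrite HeS /= HeS /He; case: hermite_pair.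
Qed.

(* Generic case of the recurrence below: with t = d + 2j it amounts to the
   identity (t + 2) C(t + 1, d + 1) = (2j + 1) C(t + 2, d + 1). *)
Lemma hcoef_rec_generic d j :
  hcoef (d.+1 + j.+1.*2) d.+1 =
    (hcoef (d + j.+1.*2) d - (d.+1 + j.*2).+1%:R * hcoef (d.+1 + j.*2) d.+1)%R.
Proof.
rewrite !hcoef_eq doubleS !addnS !addSn.
have bin_down : (d + j.*2).+2 * 'C((d + j.*2).+1, d.+1) = j.*2.+1 * 'C((d + j.*2).+2, d.+1).
  by rewrite (mul_bin_down (d + j.*2).+2) subSS -addnS addKn.
move: (d + j.*2) bin_down => t bin_down; rewrite binS oddfactS mul2n addn1.
have bin_downZ : (t.+2%:Z * 'C(t.+1, d.+1)%:Z = j.*2.+1%:Z * 'C(t.+2, d.+1)%:Z)%R.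
  by rewrite -!PoszM bin_down.
move: bin_downZ; move: 'C(t.+2, d.+1) 'C(t.+2, d) 'C(t.+1, d.+1) (oddfact j) => B1 B0 C O.
move=> bin_downZ; rewrite !PoszM (PoszD B1 B0) natz exprS.
apply/eqP; rewrite -subr_eq0; apply/eqP.
transitivity ((-1) ^+ j * O%:Z * (t.+2%:Z * C%:Z - j.*2.+1%:Z * B1%:Z))%R; first ring.
by rewrite bin_downZ subrr mulr0.
Qed.

Lemma hcoef_rec k d :
  hcoef k.+2 d = ((if d == 0 then 0 else hcoef k.+1 d.-1) - k.+1%:R * hcoef k d)%R.
Proof.
case: (hcoef_cases k.+2 d) => [lt_kd|odd_kd|[j def_k]].
- case: d lt_kd => // d lt_kd.
  by rewrite /= !hcoef_gt ?mulr0 ?subr0 // ltnW // ltnW.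
- rewrite (hcoef_odd odd_kd) (@hcoef_odd k d); last by move: odd_kd; rewrite !oddD /=; case: odd.
  case: d odd_kd => [|d] odd_kd /=; first by rewrite mulr0 subr0.
  rewrite hcoef_odd ?mulr0 ?subr0 //.
  by move: odd_kd; rewrite !addSn addnS /= negbK.
case: d def_k => [|d] def_k.
  case: j def_k => [|j] def_k //.
  have def_k0 : k = 0 + j.*2 by rewrite doubleS in def_k; lia.
  rewrite /= def_k0 hcoef_eq -def_k0 def_k hcoef_eq oddfactS !bin0 !mul1n.
  have -> : k.+1 = 2 * j + 1 by lia.
  by rewrite exprS natz !PoszM !PoszD ?PoszM; ring.
case: j def_k => [|j] def_k.
  have <- : k.+1 = d by lia.
  by rewrite /= (hcoef_gt (ltnW (ltnSn k.+1))) mulr0 subr0 !hcoef_diag.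
have def_k0 : d.+1 + j.*2 = k by rewrite doubleS in def_k; lia.
have def_k1 : d + j.+1.*2 = k.+1 by rewrite doubleS; lia.
by have := hcoef_rec_generic d j; rewrite -def_k def_k0 def_k1.
Qed.

Lemma He_coef k d : ((He k)`_d)%R = hcoef k d.
Proof.
suff He_pair : forall i, (forall d, ((He i)`_d)%R = hcoef i d) /\
                         (forall d, ((He i.+1)`_d)%R = hcoef i.+1 d).
  by case: (He_pair k).
elim=> [|i [IHi IHi1]]; split=> // e.
- by rewrite He0 coefC; case: e => [|e]; rewrite ?hcoef_diag ?hcoef_gt.
- rewrite He1 coefX; case: e => [|[|e]] /=.
  + by rewrite hcoef_odd.
  + by rewrite hcoef_diag.
  + by rewrite hcoef_gt.
rewrite He_rec coefB coefXM coefZ IHi hcoef_rec.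
by case: e => [|e] //=; rewrite IHi1.
Qed.

Lemma prime_dvd_fact p n : prime p -> (p %| n`!) = (p <= n).
Proof.
move=> p_pr; elim: n => [|n IHn].
  by rewrite fact0 dvdn1 leqNgt prime_gt0 //; case: eqP p_pr => // ->.
rewrite factS Euclid_dvdM // IHn.
case: (leqP p n) => [le_pn|lt_np]; first by rewrite orbT (leqW le_pn).
rewrite orbF; apply/idP/idP => [/dvdn_leq -> //|le_pn].
by have -> : p = n.+1 by lia.
Qed.

Lemma dvdn_lt_double q x : 0 < x -> x < 2 * q -> (q %| x) = (x == q).
Proof.
move=> x_gt0 lt_x2q; apply/idP/eqP => [/dvdnP [c def_x]|->]; last exact: dvdnn.
by subst x; case: c x_gt0 lt_x2q => [|[|c]] //=; [rewrite mul1n | lia].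
Qed.

Lemma dvd_oddfact q j : prime q -> odd q -> j <= q -> (q %| oddfact j) = (q./2 < j).
Proof.
move=> q_pr odd_q; elim: j => [|j IHj] le_jq.
  by rewrite oddfact0 dvdn1 ltn0; apply/negbTE/eqP => q1; rewrite q1 in q_pr.
have def_q := odd_double_half q; rewrite odd_q in def_q.
rewrite oddfactS Euclid_dvdM // IHj ?(ltnW le_jq) // dvdn_lt_double; [|lia|lia].
case: (ltnP q./2 j) => [lt_qj|le_jq2]; first by rewrite orTb (leqW lt_qj).
by rewrite orFb; apply/eqP/idP; lia.
Qed.

(* ... and q^2 never divides it, as q is the only factor 2i + 1 < 2q
   divisible by q. *)
Lemma sqr_ndvd_oddfact q j : prime q -> odd q -> j <= q -> ~~ (q * q %| oddfact j).
Proof.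
move=> q_pr odd_q; elim: j => [|j IHj] le_jq.
  by rewrite oddfact0 dvdn1 muln_eq1 andbb; apply/eqP => q1; rewrite q1 in q_pr.
have def_q := odd_double_half q; rewrite odd_q in def_q.
rewrite oddfactS; case: (eqVneq j q./2) => [def_j|ne_jq2].
  have -> : 2 * j + 1 = q by lia.
  by rewrite dvdn_pmul2r ?prime_gt0 // dvd_oddfact ?def_j ?ltnn //; lia.
have qq_coprime : coprime (q * q) (2 * j + 1).
  rewrite coprimeMl andbb prime_coprime // dvdn_lt_double; [|lia|lia].
  by apply/eqP; lia.
by rewrite Gauss_dvdl // IHj // ltnW.
Qed.

(* For q <= k < 2q, every coefficient of He_k below x^q is divisible by q:
   q divides either the double factorial or, as q | k! = C(k, d) d! (k-d)!
   with d, k - d < q, the binomial coefficient. *)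
Lemma hcoef_dvd q k d : prime q -> odd q -> q <= k -> k < 2 * q -> d < q ->
  (q%:Z %| hcoef k d)%Z.
Proof.
move=> q_pr odd_q le_qk lt_k2q lt_dq.
case: (hcoef_cases k d) => [lt_kd|odd_kd|[j def_k]]; first by rewrite hcoef_gt.
  by rewrite hcoef_odd.
rewrite def_k hcoef_eq -def_k; apply: dvdz_mull; rewrite dvdzE /=.
have def_q := odd_double_half q; rewrite odd_q in def_q.
case: (ltnP q./2 j) => [lt_qj|le_jq].
  by apply: dvdn_mull; rewrite dvd_oddfact //; lia.
apply: dvdn_mulr.
have := bin_fact (leq_addr j.*2 d); rewrite -def_k => fact_k.
have : q %| k`! by rewrite prime_dvd_fact.
rewrite -fact_k !Euclid_dvdM // !prime_dvd_fact // (leqNgt q d) lt_dq /=.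
by case/orP => [|le_q_kd] //; lia.
Qed.

Lemma oddfact_exact q j : prime q -> odd q -> q./2 < j <= q ->
  exists2 D, oddfact j = D * q & ~~ (q %| D).
Proof.
move=> q_pr odd_q /andP [lt_qj le_jq].
have q_dvd : q %| oddfact j by rewrite dvd_oddfact.
exists (oddfact j %/ q); first by rewrite divnK.
apply: contra (sqr_ndvd_oddfact q_pr odd_q le_jq) => /dvdnP [c def_D].
by rewrite -(divnK q_dvd) def_D -mulnA dvdn_mull.
Qed.

(* Position of the relevant double factorials: for odd q and q <= n < 2q - 1,
   (2u-1)!! with u = ceil(n/2) contains the factor q, while the one with
   u = ceil((n-q)/2) does not. *)
Lemma uphalf_bounds q n : odd q -> q <= n -> n.+1 < 2 * q ->
  q./2 < uphalf n <= q /\ uphalf (n - q) <= q./2.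
Proof.
move=> odd_q le_qn lt_n2q; rewrite !uphalf_half.
have := odd_double_half q; have := odd_double_half n; have := odd_double_half (n - q).
by rewrite odd_q oddB // odd_q; case: odd => /=; lia.
Qed.

Local Open Scope ring_scope.

Definition has_parity (R : nzRingType) (e : nat) (p : {poly R}) : Prop :=
  forall d, odd (d + e) -> p`_d = 0.

Lemma He_parity k : has_parity k (He k).
Proof. by move=> d odd_dk; rewrite He_coef hcoef_odd // addnC. Qed.

Lemma parity_deriv (R : nzRingType) e (p : {poly R}) :
  has_parity e p -> has_parity e.+1 p^`().
Proof. by move=> par_p d odd_de; rewrite coef_deriv par_p ?mul0rn // addSn -addnS. Qed.

Lemma parity_mul (R : nzRingType) a b (f g : {poly R}) :
  has_parity a f -> has_parity b g -> has_parity (a + b)%N (f * g).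
Proof.
move=> par_f par_g d odd_d; rewrite coefM big1 // => i _.
have le_id : (i <= d)%N by rewrite -ltnS ltn_ord.
have : odd (i + a) || odd (d - i + b).
  by move: odd_d; rewrite !oddD oddB //; do 4!case: odd.
by case/orP => [/par_f -> | /par_g ->]; rewrite ?mul0r ?mulr0.
Qed.

Lemma parity_sub (R : nzRingType) e (f g : {poly R}) :
  has_parity e f -> has_parity e g -> has_parity e (f - g).
Proof. by move=> par_f par_g d odd_d; rewrite coefB par_f ?par_g ?subr0. Qed.

Lemma R_nn_odd_coef n m : odd m -> (R_nn n)`_m = 0.
Proof.
have e : (n + n.+2 = n.+1 + n.+1)%N by rewrite addnS addSn.
have par_R : has_parity (n + n.+2)%N (R_nn n).
  apply: parity_sub; last rewrite e; apply: parity_mul => //;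
    by [apply: He_parity | apply: parity_deriv; apply: He_parity].
by move=> odd_m; apply: par_R; rewrite e addnn oddD odd_double odd_m.
Qed.

Definition dvd_below (q : nat) (p : {poly int}) : Prop :=
  forall d, (d < q)%N -> (q%:Z %| p`_d)%Z.

Lemma He_dvd_below q k : prime q -> odd q -> (q <= k < 2 * q)%N -> dvd_below q (He k).
Proof. by move=> q_pr odd_q /andP [le_qk lt_k2q] d lt_dq; rewrite He_coef hcoef_dvd. Qed.

(* The coefficient of x^(q-1) in p' picks up the factor q. *)
Lemma dvd_below_deriv q p : dvd_below q p -> dvd_below q p^`().
Proof.
move=> dvd_p d lt_dq; rewrite coef_deriv -mulr_natr natz.
have [lt_d1q|<-] : (d.+1 < q)%N \/ d.+1 = q by lia.
  exact/dvdz_mulr/dvd_p.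
by rewrite dvdz_mull.
Qed.

Lemma dvd_below_mul q f g : dvd_below q f -> dvd_below q g ->
  forall m, (m < q)%N -> (q%:Z * q%:Z %| (f * g)`_m)%Z.
Proof.
move=> dvd_f dvd_g m lt_mq; rewrite coefM; apply: rpred_sum => i _.
have le_im : (i <= m)%N by rewrite -ltnS ltn_ord.
by apply: dvdz_mul; [apply: dvd_f | apply: dvd_g]; apply: leq_ltn_trans lt_mq;
  rewrite ?leq_subr.
Qed.

Lemma R_nn_low_coef q n m : prime q -> odd q -> (q <= n)%N -> (n.+1 < 2 * q)%N ->
  (m <= q)%N -> (q%:Z * q%:Z %| (R_nn n)`_m)%Z.
Proof.
move=> q_pr odd_q le_qn lt_n2q; rewrite leq_eqVlt => /orP [/eqP-> | lt_mq].
  by rewrite R_nn_odd_coef.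
have dvdHn : dvd_below q (He n) by apply: He_dvd_below; rewrite // le_qn ltnW.
have dvdHn1 : dvd_below q (He n.+1) by apply: He_dvd_below; rewrite // ltnW.
rewrite /R_nn /Wr2 coefB; apply: rpredB; apply: dvd_below_mul => //;
  exact: dvd_below_deriv.
Qed.

Lemma size_deriv_le (R : nzRingType) (p : {poly R}) : (size p^`() <= (size p).-1)%N.
Proof.
have [->|nz_p] := eqVneq p 0; first by rewrite deriv0 size_poly0.
by rewrite -ltnS prednK ?lt_size_deriv // size_poly_gt0.
Qed.

Lemma size_He k : (size (He k) <= k.+1)%N.
Proof. by apply/leq_sizeP => d lt_kd; rewrite He_coef hcoef_gt. Qed.

Lemma size_R_nn n : (size (R_nn n) <= (2 * n).+1)%N.
Proof.
have sizeM (f g : {poly int}) a b :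
    (size f <= a)%N -> (size g <= b)%N -> (size (f * g)%R <= (a + b).-1)%N.
  move=> le_f le_g; apply: leq_trans (size_mul_leq f g) _.
  by move: le_f le_g; clear; lia.
have sizeD k : (size (He k)^`() <= k)%N.
  by apply: leq_trans (size_deriv_le _) _; case: size (size_He k).
rewrite /R_nn /Wr2 (leq_trans (size_polyD _ _)) // size_polyN geq_max.
apply/andP; split.
  by apply: leq_trans (sizeM _ _ n.+1 n.+1 (size_He n) (sizeD n.+1)) _; lia.
by apply: leq_trans (sizeM _ _ n n.+2 (sizeD n) (size_He n.+1)) _; lia.
Qed.

Definition hermite_wr0 (k : nat) : int := (Wr2 (He k) (He k.+1))`_0.

(* The square-free part of hermite_wr0 k: 1 for odd k, k + 1 for even k. *)
Definition wr0_core (k : nat) : nat := if odd k then 1%N else k.+1.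

Lemma hermite_wr0E k :
  hermite_wr0 k = ((oddfact (uphalf k) ^ 2 * wr0_core k)%N)%:Z.
Proof.
have sign2 a : (-1) ^+ a * (-1) ^+ a = 1 :> int.
  by rewrite -exprD addnn -mul2n exprM sqrrN !expr1n.
have He0coef a : hcoef a.*2 0 = (-1) ^+ a * (oddfact a)%:Z.
  by have := hcoef_eq 0 a; rewrite add0n bin0 mul1n.
have He1coef a : hcoef a.*2.+1 1 = (-1) ^+ a * (oddfact a.+1)%:Z.
  by have := hcoef_eq 1 a; rewrite add1n bin1 oddfactS -mul2n => ->; rewrite addn1 mulnC.
rewrite /hermite_wr0 /Wr2 coefB !coef0M !coef_deriv !He_coef !mulr1n /wr0_core.
rewrite -[k]odd_double_half; move: k./2 => a; case: odd; rewrite /= ?add1n ?add0n.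
  rewrite odd_double doubleK -doubleS He0coef He1coef.
  rewrite !(@hcoef_odd _ 0) ?addn0 /= ?odd_double //.
  rewrite mul0r sub0r exprS muln1 -mulnn PoszM.
  by rewrite mulN1r mulNr mulrN opprK mulrACA sign2 mul1r.
rewrite uphalf_double odd_double He0coef He1coef (@hcoef_odd _ 1) ?addn1 /= ?odd_double //.
rewrite mul0r subr0 mulrACA sign2 mul1r -PoszM; congr Posz.
by rewrite oddfactS -mul2n addn1; ring.
Qed.

(* The Wronskian f g' - f' g over an arbitrary commutative ring; Wr2 is its
   instance over Z. *)
Definition wronskian (R : comNzRingType) (f g : {poly R}) : {poly R} :=
  f * g^`() - f^`() * g.

Lemma wronskianMl (R : comNzRingType) (h f g : {poly R}) :
  wronskian (h * f) (h * g) = h ^+ 2 * wronskian f g.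
Proof. by rewrite /wronskian !derivM; ring. Qed.

Lemma map_wronskian (R S : comNzRingType) (phi : {rmorphism R -> S}) (f g : {poly R}) :
  map_poly phi (wronskian f g) = wronskian (map_poly phi f) (map_poly phi g).
Proof. by rewrite /wronskian rmorphB !rmorphM /= !deriv_map. Qed.

(* -1 is not a square modulo a prime q = 3 (mod 4): by Fermat, a square root z
   of -1 would satisfy z = z^q = z (z^2)^((q-1)/2) = -z. *)
Lemma Fp_no_sqrt_m1 q (z : 'F_q) : prime q -> (q %% 4 = 3)%N -> z ^+ 2 != -1.
Proof.
move=> q_pr q_mod4; apply/eqP => z2.
have two_nz : 2%:R != 0 :> 'F_q.
  rewrite -(dvdz_pcharf (pchar_Fp q_pr) 2) dvdzE /=.
  by apply/negP => /dvdn_leq le_q2; move: q_mod4 (le_q2 isT); lia.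
have def_q : q = (2 * (2 * (q %/ 4) + 1) + 1)%N by have := divn_eq q 4; lia.
have zq : z ^+ (2 * (2 * (q %/ 4) + 1) + 1) = z.
  by rewrite -def_q; have := expf_card z; rewrite card_Fp.
rewrite exprD exprM z2 exprD exprM sqrrN !expr1n mul1r !expr1 mulN1r in zq.
have : z *+ 2 = 0 by rewrite mulr2n -{1}zq addNr.
rewrite -mulr_natr => /eqP; rewrite mulf_eq0 (negbTE two_nz) orbF => /eqP z0.
by move: z2; rewrite z0 expr0n => /eqP; rewrite eq_sym oppr_eq0 oner_eq0.
Qed.

(* If a v + u b = 0 then a b (u v) = -(u b)^2: so when a b u v = y^2 with
   u b != 0, the ratio y / (u b) is a square root of -1. *)
Lemma sqr_ratio_m1 (F : fieldType) (a b u v y : F) :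
  a * v + u * b = 0 -> a * b * (u * v) = y ^+ 2 -> u * b != 0 ->
  (y / (u * b)) ^+ 2 = -1.
Proof.
move=> lin sq nz_ub; rewrite expr_div_n -sq.
have av : a * v = - (u * b) by apply/eqP; rewrite -addr_eq0 lin.
transitivity ((a * v) * (u * b) / (u * b) ^+ 2); first by congr (_ / _); ring.
by rewrite av mulNr -expr2 mulNr divff // expf_neq0.
Qed.

Lemma coefM_lowest (R : nzRingType) (f g : {poly R}) i j :
  (forall k, (k < i)%N -> f`_k = 0) -> (forall l, (l < j)%N -> g`_l = 0) ->
  (forall m, (m < i + j)%N -> (f * g)`_m = 0) /\ (f * g)`_(i + j) = f`_i * g`_j.
Proof.
move=> f_low g_low; split=> [m lt_m_ij|].
  rewrite coefM big1 // => k _; case: (ltnP k i) => [/f_low -> | le_ik].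
    by rewrite mul0r.
  by rewrite g_low ?mulr0 //; have := ltn_ord k; lia.
have lt_i_ij : (i < (i + j).+1)%N by rewrite ltnS leq_addr.
rewrite coefM (bigD1 (Ordinal lt_i_ij)) //= addKn big1 ?addr0 // => k.
rewrite -val_eqE /= => ne_ki; case: (ltnP k i) => [/f_low -> | le_ik].
  by rewrite mul0r.
by rewrite g_low ?mulr0 //; move: ne_ki (ltn_ord k); lia.
Qed.

Lemma lowest_coef (R : nzRingType) (p : {poly R}) : p != 0 ->
  exists i, p`_i != 0 /\ forall k, (k < i)%N -> p`_k = 0.
Proof.
move=> nz_p; have ex_nz : exists i, p`_i != 0.
  by exists (size p).-1; rewrite -lead_coefE lead_coef_eq0.
case: (ex_minnP ex_nz) => i nz_i min_i; exists i; split=> // k lt_ki.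
by apply/eqP; apply: contraTT lt_ki => /min_i; rewrite -leqNgt.
Qed.

Lemma size_mul_coef (R : idomainType) (P Q : {poly R}) i j : P`_i != 0 -> Q`_j != 0 ->
  [/\ (i < size P)%N, (j < size Q)%N & size (P * Q) = (size P + size Q).-1].
Proof.
move=> nz_Pi nz_Qj; rewrite size_mul; last 2 first.
- by apply: contraNneq nz_Pi => ->; rewrite coef0.
- by apply: contraNneq nz_Qj => ->; rewrite coef0.
by split=> //; rewrite ltnNge; [apply: contra nz_Pi | apply: contra nz_Qj];
  move=> /leq_sizeP ->.
Qed.

Section ResiduesModPrime.

Variable q : nat.
Hypothesis q_prime : prime q.

Local Notation modq x := (intr x : 'F_q).
Local Notation red p := (map_poly (intr : int -> 'F_q) p).

Lemma coef_red (p : {poly int}) k : (red p)`_k = modq p`_k.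
Proof. by rewrite coef_map. Qed.

Lemma dvdz_Fp (x : int) : (q%:Z %| x)%Z = (x%:~R == 0 :> 'F_q).
Proof. exact: (dvdz_pcharf (pchar_Fp q_prime)). Qed.

Lemma residue_orders (P Q : {poly int}) :
  (forall m, (m < 2 * q)%N -> (red (P * Q))`_m = 0) -> (red (P * Q))`_(2 * q) != 0 ->
  exists i j, [/\ (i + j = 2 * q)%N, (red P)`_i != 0, (red Q)`_j != 0,
    forall k, (k < i)%N -> (red P)`_k = 0 & forall l, (l < j)%N -> (red Q)`_l = 0].
Proof.
rewrite rmorphM /= => low_PQ nz_PQ.
have nz_P : red P != 0 by apply: contraNneq nz_PQ => ->; rewrite mul0r coef0.
have nz_Q : red Q != 0 by apply: contraNneq nz_PQ => ->; rewrite mulr0 coef0.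
have [i [nz_Pi low_P]] := lowest_coef nz_P.
have [j [nz_Qj low_Q]] := lowest_coef nz_Q.
have [low_PQij coef_PQij] := coefM_lowest low_P low_Q.
exists i, j; split=> //; case: (ltngtP (i + j) (2 * q)) => [lt_ij|gt_ij|//].
  move: (low_PQ _ lt_ij); rewrite coef_PQij => /eqP.
  by rewrite mulf_eq0 (negbTE nz_Pi) (negbTE nz_Qj).
by move: nz_PQ; rewrite low_PQij ?eqxx.
Qed.

Lemma unequal_orders (P Q : {poly int}) i j b : (i < j)%N ->
  (forall k, (k < i)%N -> (red P)`_k = 0) -> (forall l, (l < j)%N -> (red Q)`_l = 0) ->
  (red P)`_i != 0 -> Q`_0 = q%:Z * b -> modq b != 0 ->
  ~~ (q%:Z * q%:Z %| (P * Q)`_i)%Z.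
Proof.
move=> lt_ij low_P low_Q nz_Pi def_Q0 nz_b.
have nz_q : q%:Z != 0 by rewrite eqz_nat -lt0n prime_gt0.
rewrite coefM big_ord_recr /= subnn def_Q0 rpredDl; last first.
  apply: rpred_sum => k _; apply: dvdz_mul; rewrite dvdz_Fp // -coef_red.
    by rewrite low_P.
  by rewrite low_Q // (leq_ltn_trans (leq_subr _ _) lt_ij).
by rewrite mulrCA dvdz_mul2l // dvdz_Fp // intrM mulf_eq0 negb_or -coef_red nz_Pi.
Qed.

Lemma equal_orders (P Q : {poly int}) a b :
  (forall k, (k < q)%N -> (red P)`_k = 0) -> (forall l, (l < q)%N -> (red Q)`_l = 0) ->
  P`_0 = q%:Z * a -> Q`_0 = q%:Z * b -> (q%:Z * q%:Z %| (P * Q)`_q)%Z ->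
  modq a * (red Q)`_q + (red P)`_q * modq b = 0.
Proof.
move=> low_P low_Q def_P0 def_Q0.
have [q' def_q] : exists q', q = q'.+1 by exists q.-1; rewrite prednK ?prime_gt0.
have middle : (q%:Z * q%:Z %| \sum_(k < q') P`_(bump 0 k) * Q`_(q - bump 0 k))%Z.
  apply: rpred_sum => k _; apply: dvdz_mul; rewrite dvdz_Fp // -coef_red.
    by rewrite low_P // def_q /bump add1n ltnS.
  by rewrite low_Q // /bump def_q add1n subSS ltnS leq_subr.
rewrite coefM big_ord_recr /= subnn.
have -> : \sum_(i < q) P`_i * Q`_(q - i) =
          P`_0 * Q`_q + \sum_(k < q') P`_(bump 0 k) * Q`_(q - bump 0 k).
  by rewrite def_q big_ord_recl subn0.
have nz_q : q%:Z != 0 by rewrite eqz_nat -lt0n prime_gt0.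
rewrite addrAC rpredDr // def_P0 def_Q0 -mulrA (mulrCA P`_q) -mulrDr dvdz_mul2l //.
by rewrite dvdz_Fp // rmorphD !rmorphM !coef_red => /eqP.
Qed.

Section Factorization.

Variables (P Q : {poly int}) (X y : int).
Hypothesis q_mod4 : (q %% 4 = 3)%N.
Hypothesis PQ_dvd_sqr : forall m, (m <= q)%N -> (q%:Z * q%:Z %| (P * Q)`_m)%Z.
Hypothesis PQ_low : forall m, (m < 2 * q)%N -> modq (P * Q)`_m = 0.
Hypothesis PQ_const : (P * Q)`_0 = q%:Z * q%:Z * X.
Hypothesis PQ_square : modq X * modq (P * Q)`_(2 * q) = modq y ^+ 2.
Hypothesis y_nz : modq y != 0.

Lemma PQ_square_nz : modq X * modq (P * Q)`_(2 * q) != 0.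
Proof. by rewrite PQ_square expf_neq0. Qed.

(* If the lowest residues of P and Q both had positive degree, then P_0 = q a
   and Q_0 = q b with X = a b, and comparing R_min(i,j) modulo q^2 (or R_q and
   R_(2q) when i = j = q) leads to a contradiction. *)
Lemma positive_orders_absurd i j : (i.+1 + j.+1 = 2 * q)%N ->
  (red P)`_i.+1 != 0 -> (red Q)`_j.+1 != 0 ->
  (forall k, (k <= i)%N -> (red P)`_k = 0) -> (forall l, (l <= j)%N -> (red Q)`_l = 0) ->
  False.
Proof.
move=> sum_ij nz_Pi nz_Qj low_P low_Q.
have q_gt0 := prime_gt0 q_prime.
have [a def_P0] : exists a, P`_0 = q%:Z * a.
  by exists (P`_0 %/ q%:Z)%Z; rewrite mulrC divzK // dvdz_Fp // -coef_red low_P.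
have [b def_Q0] : exists b, Q`_0 = q%:Z * b.
  by exists (Q`_0 %/ q%:Z)%Z; rewrite mulrC divzK // dvdz_Fp // -coef_red low_Q.
have def_X : X = a * b.
  apply: (mulfI (_ : q%:Z * q%:Z != 0)); first by rewrite mulf_neq0 // eqz_nat -lt0n.
  by rewrite -PQ_const coef0M def_P0 def_Q0 mulrACA.
have [nz_a nz_b] : modq a != 0 /\ modq b != 0.
  apply/andP; rewrite -negb_or -mulf_eq0 -intrM -def_X.
  by apply: contraNneq PQ_square_nz => ->; rewrite mul0r.
case: (ltngtP i j) => [lt_ij|lt_ji|eq_ij].
- have := unequal_orders (lt_ij : (i.+1 < j.+1)%N) low_P low_Q nz_Pi def_Q0 nz_b.
  by rewrite PQ_dvd_sqr //; lia.
- have := unequal_orders (lt_ji : (j.+1 < i.+1)%N) low_Q low_P nz_Qj def_P0 nz_a.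
  by rewrite mulrC PQ_dvd_sqr //; lia.
have def_i : i.+1 = q by lia.
have low_Pq k : (k < q)%N -> (red P)`_k = 0.
  by move=> lt_kq; apply: low_P; rewrite -ltnS def_i.
have low_Qq k : (k < q)%N -> (red Q)`_k = 0.
  by move=> lt_kq; apply: low_Q; rewrite -ltnS -eq_ij def_i.
have nz_Pq : (red P)`_q != 0 by move: nz_Pi; rewrite def_i.
have R2q : (red (P * Q))`_(2 * q) = (red P)`_q * (red Q)`_q.
  by rewrite rmorphM /=; have [_ <-] := coefM_lowest low_Pq low_Qq; rewrite addnn -mul2n.
have lin := equal_orders low_Pq low_Qq def_P0 def_Q0 (PQ_dvd_sqr (leqnn q)).
have /eqP := Fp_no_sqrt_m1 (modq y / ((red P)`_q * modq b)) q_prime q_mod4; apply.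
apply: sqr_ratio_m1 lin _ (mulf_neq0 nz_Pq nz_b).
by rewrite -intrM -def_X -PQ_square -coef_red R2q.
Qed.

Lemma factor_orders :
  exists i j, [/\ (i + j = 2 * q)%N, i = 0%N \/ j = 0%N, P`_i != 0 & Q`_j != 0].
Proof.
have [i [j [sum_ij nz_Pi nz_Qj low_P low_Q]]] : exists i j,
    [/\ (i + j = 2 * q)%N, (red P)`_i != 0, (red Q)`_j != 0,
     forall k, (k < i)%N -> (red P)`_k = 0 & forall l, (l < j)%N -> (red Q)`_l = 0].
  apply: residue_orders => [m lt_m2q|]; rewrite coef_red; first exact: PQ_low.
  by apply: contraNneq PQ_square_nz => ->; rewrite mulr0.
have nz_int (p : {poly int}) k : (red p)`_k != 0 -> p`_k != 0.
  by rewrite coef_red; apply: contraNneq => ->; rewrite rmorph0.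
exists i, j; split; rewrite ?nz_int //.
case: i j sum_ij nz_Pi low_P nz_Qj low_Q => [|i] [|j]; [by left | by left | by right |].
by move=> sum_ij nz_Pi low_P nz_Qj low_Q; case: (positive_orders_absurd sum_ij nz_Pi nz_Qj).
Qed.

End Factorization.

End ResiduesModPrime.

Section HermiteModPrime.

Variable q : nat.
Hypothesis q_prime : prime q.
Hypothesis q_odd : odd q.

Local Notation modq x := (intr x : 'F_q).
Local Notation red p := (map_poly (intr : int -> 'F_q) p).

Lemma red_He_rec k : red (He k.+2) = 'X * red (He k.+1) - k.+1%:R *: red (He k).
Proof. by rewrite He_rec rmorphB rmorphM /= map_polyX map_polyZ /= rmorph_nat. Qed.

Lemma red_He_prime : red (He q) = 'X^q.
Proof.
apply/polyP => d; rewrite coef_map coefXn He_coef /=.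
case: (ltngtP d q) => [lt_dq|lt_qd|->]; last by rewrite hcoef_diag.
  by apply/eqP; rewrite -(dvdz_Fp q_prime) hcoef_dvd //; have := prime_gt0 q_prime; lia.
by rewrite hcoef_gt.
Qed.

Lemma red_He_shift s : red (He (q + s)) = 'X^q * red (He s).
Proof.
have q0 : q%:R = 0 :> 'F_q by apply: pchar_Fp_0.
suff shift_pair : red (He (q + s)) = 'X^q * red (He s) /\
                  red (He (q + s).+1) = 'X^q * red (He s.+1) by case: shift_pair.
elim: s => [|s [IHs IHs1]].
  rewrite addn0 red_He_prime He0 rmorph1 mulr1; split=> //.
  have [q' def_q] : exists q', q = q'.+1 by exists q.-1; rewrite prednK ?prime_gt0.
  have -> : He q.+1 = He q'.+2 by rewrite def_q.
  rewrite red_He_rec -def_q red_He_prime q0 scale0r subr0.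
  by rewrite He1 map_polyX mulrC.
split; first by rewrite addnS.
rewrite addnS red_He_rec IHs1 IHs red_He_rec -addnS natrD q0 add0r.
by rewrite scalerAr mulrBr mulrCA.
Qed.

Lemma red_R_nn n : (q <= n)%N ->
  red (R_nn n) = 'X^(2 * q) * red (Wr2 (He (n - q)) (He (n - q).+1)).
Proof.
move=> le_qn; move: (n - q)%N (subnKC le_qn) => k <-{n le_qn}.
have WrE f g : Wr2 f g = wronskian f g by [].
rewrite /R_nn -addnS !WrE !map_wronskian !red_He_shift.
by rewrite wronskianMl -exprM mulnC.
Qed.

Lemma R_nn_residues n : (q <= n)%N ->
  (forall m, (m < 2 * q)%N -> modq (R_nn n)`_m = 0) /\
  modq (R_nn n)`_(2 * q) = modq (hermite_wr0 (n - q)%N).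
Proof.
move=> le_qn; split=> [m lt_m2q|]; rewrite -coef_red red_R_nn // coefXnM.
  by rewrite lt_m2q.
by rewrite ltnn subnn coef_red.
Qed.

(* This is where the
   hypothesis that n + 1 is a perfect square enters. *)
Lemma R_nn_const_square n m : (q <= n)%N -> (n.+1 < 2 * q)%N ->
  n.+1 = (m ^ 2)%N ->
  exists X y : nat, [/\ (R_nn n)`_0 = (q * q * X)%N%:Z, y%:R != 0 :> 'F_q &
    X%:R * (hermite_wr0 (n - q))%:~R = y%:R ^+ 2 :> 'F_q].
Proof.
move=> le_qn lt_n2q def_m.
have [half_n half_nq] := uphalf_bounds q_odd le_qn lt_n2q.
have [D def_of ndvdD] := oddfact_exact q_prime q_odd half_n.
have ndvd_of : ~~ (q %| oddfact (uphalf (n - q)))%N.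
  by rewrite dvd_oddfact -?leqNgt //; lia.
have ndvd_m : ~~ (q %| m)%N.
  apply: contra (_ : ~~ (q %| n.+1)%N) => [q_dvd_m|].
    by rewrite def_m expnS dvdn_mulr.
  by rewrite dvdn_lt_double // neq_ltn ltnS le_qn orbT.
have q0 : q%:R = 0 :> 'F_q by apply: pchar_Fp_0.
have core_sq : (wr0_core n * wr0_core (n - q))%:R = (m ^ 2)%:R :> 'F_q.
  rewrite -def_m /wr0_core oddB // q_odd; case: odd => /=; last by rewrite muln1.
  by rewrite mul1n -{2}(subnKC le_qn) -addnS natrD q0 add0r.
have nzFp k : (k%:R != 0 :> 'F_q) = ~~ (q %| k)%N.
  by rewrite -[(q %| k)%N]/(q%:Z %| k%:Z)%Z (dvdz_Fp q_prime).
exists (D ^ 2 * wr0_core n)%N, (D * oddfact (uphalf (n - q)) * m)%N; split.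
- rewrite -[(R_nn n)`_0]/(hermite_wr0 n) hermite_wr0E def_of; congr Posz.
  by rewrite expnMn mulnAC [RHS]mulnC mulnn.
- by rewrite nzFp !Euclid_dvdM // !negb_or ndvdD ndvd_of ndvd_m.
by rewrite hermite_wr0E /= -natrM mulnACA natrM core_sq -natrM -natrX !expnMn.
Qed.

Lemma R_nn_qadic n m : (q <= n)%N -> (n.+1 < 2 * q)%N -> n.+1 = (m ^ 2)%N ->
  exists X y : int, [/\ forall k, (k <= q)%N -> (q%:Z * q%:Z %| (R_nn n)`_k)%Z,
    forall k, (k < 2 * q)%N -> modq (R_nn n)`_k = 0,
    (R_nn n)`_0 = q%:Z * q%:Z * X,
    modq X * modq (R_nn n)`_(2 * q) = modq y ^+ 2 & modq y != 0].
Proof.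
move=> le_qn lt_n2q def_m.
have [low_R R2q] := R_nn_residues le_qn.
have [X [y [R0 nz_y sq_X]]] := R_nn_const_square le_qn lt_n2q def_m.
exists X%:Z, y%:Z; split=> //; last by rewrite R2q.
by move=> k; apply: R_nn_low_coef.
Qed.

End HermiteModPrime.

Local Close Scope ring_scope.
Unset Implicit Arguments.

(* The main theorem; steps 1-3 give the q-adic profile of R_(n,n), step 4 the
   degrees of the lowest residues of its factors. *)
Theorem mainTheorem14 (n q : nat) :
  (3 <= n)%N ->
  (exists m : nat, n.+1 = (m ^ 2)%N) ->
  prime q -> (q <= n)%N -> (2 * n < 3 * q)%N -> q %% 4 = 3 ->
  forall p : {poly int}, divides_in_Zx p (R_nn n) ->
    ~ ((q <= (size p).-1)%N && ((size p).-1 <= n)%N).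
Proof.
move=> _ [m def_m] q_pr le_qn lt_2n3q q_mod4 p [r def_R] /andP [le_q_degp le_degp_n].
have q_odd : odd q by rewrite (divn_eq q 4) q_mod4 oddD oddM andbF.
have lt_n2q : n.+1 < 2 * q by have := prime_gt1 q_pr; lia.
have [X [y [dvd_sqr low const square nz_y]]] := R_nn_qadic q_pr q_odd le_qn lt_n2q def_m.
rewrite def_R in dvd_sqr low const square.
have [i [j [sum_ij ij0 nz_pi nz_rj]]] :=
  factor_orders q_pr q_mod4 dvd_sqr low const square nz_y.
have [lt_ip lt_jr size_pr] :
  [/\ i < size p, j < size r & size (p * r)%R = (size p + size r).-1].
  exact: size_mul_coef.
have := size_R_nn n; rewrite def_R size_pr.
by move: ij0 sum_ij lt_ip lt_jr le_q_degp le_degp_n lt_2n3q; clear; lia.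
Qed.
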